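(* Assume Assumption A holds. Let $\pi$ be any state-independent dispatch policy. Then the long-run fraction of dropped demand under $\pi$ in the $K$-th system satisfies $P^{K,\pi}=\Omega(1/K^2)$ as $K\to\infty$. In particular, $\gamma_{\mathrm o}(\pi)=-\liminf_{K\to\infty}\frac1K\log P^{K,\pi}=0$.
   Context: Model. $V_S=\{1,\dots,n\}$ (supply locations), $V_D$ (demand locations), and a bipartite compatibility graph $G=(V_S\cup V_D,E)$ with $\partial(j')=\{i\in V_S:(i,j')\in E\}$. The arrival matrix $\phi=(\phi_{j'k})_{j'\in V_D,k\in V_S}$ is nonnegative with entries summing to $1$. The $K$-th system has $K$ supply units. In each slot $t=1,2,\dots$ one customer arrives, with origin/destination $(o[t],d[t])=(j',k)$ with probability $\phi_{j'k}$, i.i.d. over slots. The state $\mathbf X^K[t]\in\{x\in\mathbb Z_{\ge0}^n:\sum_ix_i=K\}$ counts the units at each location. If a customer is served from $i$, then one unit moves from $i$ to $d[t]$; otherwise the customer is dropped and the state is unchanged. State-independent policy: $\pi$ assigns to each $j'\in V_D$, $k\in V_S$ and $t\in\mathbb N$ a probability distribution $u_{j'k}[t]$ on $\partial(j')\cup\{\emptyset\}$. A customer of type $(j',k)$ arriving at time $t$ is served from $i$ drawn from $u_{j'k}[t]$, independently of the state and the history. If $i=\emptyset$, or if location $i$ currently has no supply, the customer is dropped. $P^{K,\pi}$ denotes the long-run average fraction of customers dropped, minimized over initial states (the optimistic measure). Its exponent is $\gamma_{\mathrm o}(\pi)=-\liminf_K\frac1K\log P^{K,\pi}$. Assumption A: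 there exist $j'\in V_D$ and $k\notin\partial(j')$ with $\phi_{j'k}>0$. *)

From mathcomp Require Import all_boot all_order all_algebra.
From mathcomp Require Import all_classical all_reals all_analysis.
Set Implicit Arguments. Unset Strict Implicit. Unset Printing Implicit Defensive.
Import Order.TTheory GRing.Theory Num.Theory.
Local Open Scope ring_scope.
Local Open Scope classical_set_scope.

(* Supply locations V_S = 'I_n, demand locations VD : finType,
   compatibility graph given by E : VD -> 'I_n -> bool
   (i \in \partial(j')  <->  E j' i).
   States: x : 'I_n -> nat (number of units at each location). *)

Definition move_unit (n : nat) (x : 'I_n -> nat) (i k : 'I_n) : 'I_n -> nat :=
  fun l => ((x l - (l == i)) + (l == k))%N.

Definition arrival_matrix (R : realType) (VD : finType) (n : nat)
    (phi : VD -> 'I_n -> R) : Prop :=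
  (forall j k, 0 <= phi j k) /\ \sum_(j : VD) \sum_(k < n) phi j k = 1.

Definition assumptionA (R : realType) (VD : finType) (n : nat)
    (E : VD -> 'I_n -> bool) (phi : VD -> 'I_n -> R) : Prop :=
  exists j k, ~~ E j k /\ 0 < phi j k.

(* State-independent policy: u j k t is a probability distribution on
   option 'I_n (None = the "drop" option \emptyset), supported on
   \partial(j) \cup {None}. *)
Definition state_indep_policy (R : realType) (VD : finType) (n : nat)
    (E : VD -> 'I_n -> bool) (u : VD -> 'I_n -> nat -> option 'I_n -> R) : Prop :=
  (forall j k t o, 0 <= u j k t o) /\
  (forall j k t, \sum_(o : option 'I_n) u j k t o = 1) /\
  (forall j k t i, ~~ E j i -> u j k t (Some i) = 0).

(* expected_drops phi u t T x : expected number of customers dropped during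
   slots t, t+1, ..., t+T-1 when the state at the beginning of slot t is x. *)
Fixpoint expected_drops (R : realType) (VD : finType) (n : nat)
    (phi : VD -> 'I_n -> R) (u : VD -> 'I_n -> nat -> option 'I_n -> R)
    (t T : nat) (x : 'I_n -> nat) {struct T} : R :=
  match T with
  | 0 => 0
  | T'.+1 =>
    \sum_(j : VD) \sum_(k < n) phi j k *
      (u j k t None * (1 + expected_drops phi u t.+1 T' x) +
       \sum_(i < n) u j k t (Some i) *
         (if (0 < x i)%N
          then expected_drops phi u t.+1 T' (move_unit x i k)
          else 1 + expected_drops phi u t.+1 T' x))
  end.

(* Long-run average fraction of dropped customers from initial state x
   (slots numbered from 1). *)
Definition drop_fraction (R : realType) (VD : finType) (n : nat)
    (phi : VD -> 'I_n -> R) (u : VD -> 'I_n -> nat -> option 'I_n -> R)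
    (x : 'I_n -> nat) : R :=
  limn_inf (fun T : nat => expected_drops phi u 1 T x / T%:R).

Definition PK (R : realType) (VD : finType) (n : nat)
    (phi : VD -> 'I_n -> R) (u : VD -> 'I_n -> nat -> option 'I_n -> R)
    (K : nat) : R :=
  inf [set drop_fraction phi u x | x in [set x : 'I_n -> nat | (\sum_(i < n) x i)%N = K]].

Definition gamma_o (R : realType) (VD : finType) (n : nat)
    (phi : VD -> 'I_n -> R) (u : VD -> 'I_n -> nat -> option 'I_n -> R) : R :=
  - limn_inf (fun K : nat => ln (PK phi u K) / K%:R).

From mathcomp Require Import all_boot all_order all_algebra.
From mathcomp Require Import all_classical all_reals all_analysis.
From mathcomp Require Import ring lra zify.
Set Implicit Arguments.
Unset Strict Implicit.
Unset Printing Implicit Defensive.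

Import Order.TTheory GRing.Theory Num.Theory.
Local Open Scope ring_scope.

(* Pick j0 and l with l not in the neighbourhood of j0 and p := phi j0 l > 0,
   and let D be the cumulative mean displacement of the stock x_l at l that the
   policy would produce if no customer were ever dropped; in mean, x_l can only
   deviate from x_l(0) + D through drops.  Over a window of L ~ K^2 / p slots,
   either |D| exceeds 3K at some point, and since 0 <= x_l <= K the linear
   potential +-(x_l - D) forces at least K expected drops; or D stays within
   [-3K, 3K], and then the quadratic potential (x_l - D)^2 + p D, which grows by
   at least p per slot because a (j0, l) customer is either dropped or brings a
   unit to l from elsewhere, forces an expected drop.  Hence the drop rate is at
   least 1 / (2L) = Omega(1 / K^2) from every initial state, and
   ln P^K / K -> 0. *)

Lemma big_option (R : realType) n (f : option 'I_n -> R) :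
  \sum_(o : option 'I_n) f o = f None + \sum_(i < n) f (Some i).
Proof.
rewrite (bigD1 None) //=; congr (_ + _).
rewrite (reindex_omap Some (fun o => o)) /=; last by case.
by apply: eq_bigl => i; rewrite eqxx.
Qed.

Lemma bounded_fun_itv (R : realType) (v : R^nat) (a b : R) :
  (forall T, a <= v T <= b) -> bounded_fun v.
Proof.
move=> hv; rewrite /bounded_near; near=> M => T _ /=.
apply: le_trans (_ : `|a| + `|b| <= M); last by near: M; exact: nbhs_pinfty_ge.
have := ler_norm b; have := ler_norm (- a); have := normr_ge0 a; have := normr_ge0 b.
rewrite normrN ler_norml; case/andP: (hv T) => *; apply/andP; split; lra.
Unshelve. all: end_near.
Qed.

Lemma limn_inf_ge (R : realType) (v : R^nat) (c : R) N : bounded_fun v ->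
  (forall T, (N <= T)%N -> c <= v T) -> c <= limn_inf v.
Proof.
move=> bv hc; rewrite limn_infE //; apply: le_trans (_ : c <= infs v N) _.
  apply: lb_le_inf; first by exists (v N), N => /=.
  by move=> _ [T /= hT <-]; exact: hc.
by apply: ub_le_sup; [exact: bounded_fun_has_ubound_infs | exists N].
Qed.

Lemma limn_inf_le (R : realType) (v : R^nat) (c : R) : bounded_fun v ->
  (forall T, v T <= c) -> limn_inf v <= c.
Proof.
move=> bv hc; rewrite limn_infE //; apply: ge_sup; first by exists (infs v 0), 0%N.
move=> _ [N _ <-]; apply: le_trans (hc N); apply: ge_inf; last by exists N => /=.
exact/has_lbound_sdrop/bounded_fun_has_lbound.
Qed.

Lemma eventually_ln_div_le (R : realType) (e A : R) : 0 < e -> 0 <= A ->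
  exists N : nat, forall K : nat, (N <= K)%N -> (2 * ln (K%:R : R) + A) / K%:R <= e.
Proof.
move=> e_gt0 A_ge0.
(* ln K = 2 ln (sqrt K) < 2 sqrt K, so the quotient is below 4 / sqrt K + A / K. *)
pose f := 8 / e; pose g := 2 * A / e.
have f_ge0 : 0 <= f by rewrite divr_ge0 // ltW.
have g_ge0 : 0 <= g by rewrite divr_ge0 ?mulr_ge0 // ltW.
have ef : e * f = 8 by rewrite mulrC divfK // gt_eqF.
have eg : e * g = 2 * A by rewrite mulrC divfK // gt_eqF.
exists (Num.truncn (f ^+ 2 + g)).+1 => K hK.
have K_gt : f ^+ 2 + g < K%:R by apply: lt_le_trans (truncnS_gt _) _; rewrite ler_nat.
have K_gt0 : 0 < K%:R :> R by apply: le_lt_trans K_gt; rewrite addr_ge0 ?sqr_ge0.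
pose s := Num.sqrt (K%:R : R).
have s_gt0 : 0 < s by rewrite sqrtr_gt0.
have ss : s ^+ 2 = K%:R by rewrite sqr_sqrtr // ltW.
have lnK : ln (K%:R : R) = 2 * ln s by rewrite -ss lnXn // mulr_natl.
have lns := ln_sublinear s_gt0.
have f_le_s : f <= s.
  rewrite leNgt; apply/negP => s_lt_f.
  have : s ^+ 2 < f ^+ 2 by rewrite ltr_pXn2r // ?nnegrE ?ltW.
  by rewrite ss; lra.
have esf : e * (s * f) <= e * K%:R.
  rewrite -ss expr2; apply: ler_wpM2l; first exact: ltW.
  by apply: ler_wpM2l => //; exact: ltW.
have eg_le : e * g <= e * K%:R.
  by apply: ler_wpM2l; [exact: ltW | have := sqr_ge0 f; lra].
have : e * (s * f) = 8 * s by rewrite mulrCA ef mulrC.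
rewrite ler_pdivrMr // lnK; nra.
Qed.

Lemma limn_inf_ln_div (R : realType) (P : nat -> R) (c : R) : 0 < c ->
  (forall K, (1 <= K)%N -> c / K%:R ^+ 2 <= P K <= 1) ->
  limn_inf (fun K => ln (P K) / K%:R) = 0.
Proof.
move=> c_gt0 P_bounds.
have c_le1 : c <= 1.
  by have /andP[] := P_bounds 1%N isT; rewrite expr1n divr1; apply: le_trans.
have A_ge0 : 0 <= - ln c by rewrite oppr_ge0 ln_le0.
suff cvg0 : ((fun K => ln (P K) / K%:R) @ \oo --> (0 : R^o))%classic.
  by rewrite (cvg_limn_inf_sup cvg0).1.
apply/cvgrPdist_le => e e_gt0.
have [N hN] := eventually_ln_div_le e_gt0 A_ge0.
exists (maxn N 1) => // K /=; rewrite geq_max => /andP[NK K_ge1].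
have K_gt0 : 0 < K%:R :> R by rewrite ltr0n.
have /andP[P_ge P_le1] := P_bounds K K_ge1.
have cK_gt0 : 0 < c / K%:R ^+ 2 by rewrite divr_gt0 // exprn_gt0.
have P_gt0 : 0 < P K := lt_le_trans cK_gt0 P_ge.
have up : ln (P K) / K%:R <= 0 by rewrite mulr_le0_ge0 ?ln_le0 // invr_ge0 ltW.
have lo : (ln c - 2 * ln (K%:R : R)) / K%:R <= ln (P K) / K%:R.
  apply: ler_wpM2r; first by rewrite invr_ge0 ltW.
  have -> : ln c - 2 * ln (K%:R : R) = ln (c / K%:R ^+ 2).
    by rewrite ln_div ?posrE ?exprn_gt0 // lnXn // mulr_natl.
  by rewrite ler_ln ?posrE.
have := hN K NK; rewrite sub0r normrN ler0_norm //.
lra.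
Qed.

Section Policy.
Variables (R : realType) (VD : finType) (n : nat).
Variables (E : VD -> 'I_n -> bool) (phi : VD -> 'I_n -> R).
Variable u : VD -> 'I_n -> nat -> option 'I_n -> R.
Hypothesis phi_ge0 : forall j k, 0 <= phi j k.
Hypothesis phi_sum1 : \sum_(j : VD) \sum_(k < n) phi j k = 1.
Hypothesis u_ge0 : forall j k t o, 0 <= u j k t o.
Hypothesis u_sum1 : forall j k t, \sum_(o : option 'I_n) u j k t o = 1.
Hypothesis u_supp : forall j k t i, ~~ E j i -> u j k t (Some i) = 0.

Local Notation state := ('I_n -> nat).
Local Notation ED := (expected_drops phi u).

Definition slot_mean t (F : VD -> 'I_n -> option 'I_n -> R) : R :=
  \sum_(j : VD) \sum_(k < n) phi j k *
    (u j k t None * F j k None + \sum_(i < n) u j k t (Some i) * F j k (Some i)).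

Lemma slot_mean_le t F G :
  (forall j k o, F j k o <= G j k o) -> slot_mean t F <= slot_mean t G.
Proof.
move=> FG; apply: ler_sum => j _; apply: ler_sum => k _.
apply: ler_wpM2l => //; apply: lerD; first exact: ler_wpM2l.
by apply: ler_sum => i _; apply: ler_wpM2l.
Qed.

Lemma slot_meanD t F G :
  slot_mean t (fun j k o => F j k o + G j k o) = slot_mean t F + slot_mean t G.
Proof.
rewrite /slot_mean -big_split; apply: eq_bigr => j _ /=.
rewrite -big_split; apply: eq_bigr => k _ /=.
rewrite -mulrDr -addrACA -big_split /= -!mulrDr; congr (_ * (_ + _)).
by apply: eq_bigr => i _; rewrite mulrDr.
Qed.

Lemma slot_meanZ t c F :
  slot_mean t (fun j k o => c * F j k o) = c * slot_mean t F.
Proof.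
rewrite /slot_mean mulr_sumr; apply: eq_bigr => j _; rewrite mulr_sumr.
apply: eq_bigr => k _; rewrite (eq_bigr (fun i => c * (u j k t (Some i) * F j k (Some i)))).
  by rewrite -mulr_sumr; ring.
by move=> i _; rewrite mulrCA.
Qed.

Lemma slot_mean_cst t c : slot_mean t (fun _ _ _ => c) = c.
Proof.
rewrite /slot_mean -[RHS]mul1r -phi_sum1 mulr_suml; apply: eq_bigr => j _.
rewrite mulr_suml; apply: eq_bigr => k _.
by rewrite -mulr_suml -mulrDl -big_option u_sum1 mul1r.
Qed.

Lemma slot_meanDc t F c :
  slot_mean t (fun j k o => F j k o + c) = slot_mean t F + c.
Proof. by rewrite slot_meanD slot_mean_cst. Qed.

Lemma phi_le1 j k : phi j k <= 1.
Proof.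
rewrite -phi_sum1 (bigD1 j) //= (bigD1 k) //= -addrA lerDl addr_ge0 //.
  by apply: sumr_ge0 => k' _.
by apply: sumr_ge0 => j' _; apply: sumr_ge0.
Qed.

Definition served (x : state) (o : option 'I_n) : bool :=
  if o is Some i then (0 < x i)%N else false.

Definition dropped (x : state) (o : option 'I_n) : R := (~~ served x o)%:R.

Definition next_state (x : state) (k : 'I_n) (o : option 'I_n) : state :=
  if o is Some i then (if (0 < x i)%N then move_unit x i k else x) else x.

Definition units (x : state) : nat := \sum_(i < n) x i.

Lemma leq_units x l : (x l <= units x)%N.
Proof. by rewrite /units (bigD1 l) //= leq_addr. Qed.

Lemma units_at_bounds (x : state) l K :
  units x = K -> (0 <= (x l)%:R :> R) && ((x l)%:R <= K%:R :> R).
Proof. by move=> <-; rewrite ler0n ler_nat leq_units. Qed.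

Definition stacked (l : 'I_n) K : state := fun i => if i == l then K else 0%N.

Lemma units_stacked l K : units (stacked l K) = K.
Proof. by rewrite /units (bigD1 l) //= /stacked eqxx big1 ?addn0 // => i /negbTE ->. Qed.

Lemma units_move_unit x i k : (0 < x i)%N -> units (move_unit x i k) = units x.
Proof.
move=> xi; rewrite /units /move_unit big_split /= (bigD1 i) //= [RHS](bigD1 i) //=.
rewrite (eq_bigr x) => [|l /negbTE ->]; last by rewrite subn0.
have -> : (\sum_(l < n) (l == k) = 1)%N.
  by rewrite (bigD1 k) //= eqxx big1 // => l /negbTE ->.
rewrite eqxx; lia.
Qed.

Lemma units_next_state x k o : units (next_state x k o) = units x.
Proof. by case: o => [i|] //=; case: ifP => // /units_move_unit ->. Qed.

Lemma expected_drops_succ t T x :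
  ED t T.+1 x =
  slot_mean t (fun j k o => dropped x o + ED t.+1 T (next_state x k o)).
Proof.
rewrite /= /slot_mean; apply: eq_bigr => j _; apply: eq_bigr => k _ /=.
congr (_ * (_ + _)); apply: eq_bigr => i _ /=.
by rewrite /dropped /=; case: ifP; rewrite ?add0r.
Qed.

Lemma expected_drops_ge0 t T x : 0 <= ED t T x.
Proof.
elim: T t x => [|T IH] t x //; rewrite expected_drops_succ -(slot_mean_cst t 0).
by apply: slot_mean_le => j k o; rewrite addr_ge0 ?ler0n.
Qed.

Lemma expected_drops_le t T x : ED t T x <= T%:R.
Proof.
elim: T t x => [|T IH] t x //; rewrite expected_drops_succ.
rewrite -[T.+1]addn1 natrD addrC -(slot_mean_cst t (1 + T%:R)).
by apply: slot_mean_le => j k o; rewrite lerD ?IH // /dropped; case: served.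
Qed.

Lemma expected_drops_cat K b T1 T2 t x :
  (forall y, units y = K -> b <= ED (t + T1) T2 y) ->
  units x = K -> ED t T1 x + b <= ED t (T1 + T2) x.
Proof.
elim: T1 t x => [|T1 IH] t x hb hx; first by rewrite add0r -[t]addn0 hb.
rewrite addSn !expected_drops_succ -slot_meanDc; apply: slot_mean_le => j k o.
rewrite -addrA lerD2l IH ?units_next_state // => y /hb.
by rewrite addSnnS.
Qed.

Lemma expected_drops_mono T1 T2 t x : ED t T1 x <= ED t (T1 + T2) x.
Proof.
rewrite -[X in X <= _]addr0.
by apply: (@expected_drops_cat (units x)) => // y _; exact: expected_drops_ge0.
Qed.

Lemma expected_drops_drift K (V : nat -> state -> R) (a B M : R) s T x :
  0 <= B ->
  (forall t y, (s <= t < s + T)%N -> units y = K ->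
     V t y + a <=
     slot_mean t (fun j k o => V t.+1 (next_state y k o) + B * dropped y o)) ->
  (forall y, units y = K -> V (s + T)%N y <= M) ->
  units x = K -> a * T%:R + V s x - M <= B * ED s T x.
Proof.
move=> B_ge0; elim: T s x => [|T IH] s x hV hM hx.
  by rewrite mulr0 add0r mulr0 subr_le0 -[s]addn0 hM.
have step : V s x + a <=
    slot_mean s (fun j k o => V s.+1 (next_state x k o) + B * dropped x o).
  by apply: hV => //; rewrite leqnn addnS ltnS leq_addr.
rewrite expected_drops_succ -slot_meanZ.
apply: le_trans (_ : slot_mean s (fun j k o =>
    V s.+1 (next_state x k o) + B * dropped x o + (a * T%:R - M)) <= _).
  by rewrite slot_meanDc -natr1; lra.
apply: slot_mean_le => j k o; rewrite mulrDr.
suff : a * T%:R + V s.+1 (next_state x k o) - M <= B * ED s.+1 T (next_state x k o).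
  by lra.
apply: IH; rewrite ?units_next_state ?addSnnS //.
by move=> t y /andP[st tT]; apply: hV; rewrite ltnW // -addSnnS.
Qed.

Definition drops_every_window K L :=
  forall s y, units y = K -> 1 <= ED s L y.

Lemma expected_drops_windows K L m t x : drops_every_window K L ->
  units x = K -> m%:R <= ED t (m * L) x.
Proof.
move=> window; elim: m t x => [|m IH] t x hx; first by rewrite mul0n.
rewrite mulSn -addn1 natrD addrC.
apply: le_trans (expected_drops_cat (b := m%:R) _ hx) => [|y hy]; last exact: IH.
by rewrite lerD2r window.
Qed.

Lemma drop_rate_bounds x T : 0 <= ED 1 T x / T%:R <= 1.
Proof.
rewrite divr_ge0 ?expected_drops_ge0 //=.
have [->|T_gt0] := posnP T; first by rewrite invr0 mulr0.
by rewrite ler_pdivrMr ?mul1r ?ltr0n ?expected_drops_le.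
Qed.

Lemma drop_fraction_bounds x : 0 <= drop_fraction phi u x <= 1.
Proof.
have bv := bounded_fun_itv (drop_rate_bounds x).
rewrite (limn_inf_ge (N := 0%N) bv) ?limn_inf_le //.
  by move=> T; case/andP: (drop_rate_bounds x T).
by move=> T _; case/andP: (drop_rate_bounds x T).
Qed.

Lemma drop_fraction_ge_window K L x : (0 < L)%N -> drops_every_window K L ->
  units x = K -> (2 * L%:R)^-1 <= drop_fraction phi u x.
Proof.
move=> L_gt0 window hx.
apply: (limn_inf_ge (N := (2 * L)%N)) => [|T hT].
  exact: bounded_fun_itv (drop_rate_bounds x).
set q := (T %/ L)%N.
have T_le : (T <= 2 * (q * L))%N.
  by have := divn_eq T L; have := ltn_pmod T L_gt0; rewrite -/q; lia.
have q_le : q%:R <= ED 1 T x.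
  have := expected_drops_mono (q * L) (T %% L) 1 x; rewrite -divn_eq.
  by move=> mono; apply: le_trans mono; exact: expected_drops_windows window hx.
rewrite ler_pdivlMr ?ltr0n; last by apply: leq_trans hT; rewrite muln_gt0.
rewrite ler_pdivrMl ?mulr_gt0 ?ltr0n //; apply: le_trans (ler_wpM2l _ q_le) => //.
by rewrite -!natrM ler_nat -mulnA (mulnC L).
Qed.

Lemma PK_le1 (l : 'I_n) K : PK phi u K <= 1.
Proof.
apply: le_trans (_ : _ <= drop_fraction phi u (stacked l K)) _.
  apply: ge_inf; last by exists (stacked l K) => //; exact: units_stacked.
  by exists 0 => _ [x _ <-]; case/andP: (drop_fraction_bounds x).
by case/andP: (drop_fraction_bounds (stacked l K)).
Qed.

Lemma PK_ge_window (l : 'I_n) K L : (0 < L)%N -> drops_every_window K L ->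
  (2 * L%:R)^-1 <= PK phi u K.
Proof.
move=> L_gt0 window; apply: lb_le_inf.
  by exists (drop_fraction phi u (stacked l K)), (stacked l K) => //; exact: units_stacked.
by move=> _ [x hx <-]; exact: drop_fraction_ge_window L_gt0 window hx.
Qed.

Definition displacement (l k : 'I_n) (o : option 'I_n) : R :=
  if o is Some i then (k == l)%:R - (i == l)%:R else 0.

Definition mean_displacement t l : R :=
  slot_mean t (fun _ k o => displacement l k o).

Definition cumulative_displacement l s r : R :=
  \sum_(s <= q < r) mean_displacement q l.

Lemma cumulative_displacement0 l s : cumulative_displacement l s s = 0.
Proof. by rewrite /cumulative_displacement big_geq. Qed.

Lemma cumulative_displacementS l s r : (s <= r)%N ->
  cumulative_displacement l s r.+1 =
  cumulative_displacement l s r + mean_displacement r l.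
Proof. by move=> sr; rewrite /cumulative_displacement big_nat_recr. Qed.

Lemma next_state_at x k o l :
  (next_state x k o l)%:R = (x l)%:R + (1 - dropped x o) * displacement l k o :> R.
Proof.
case: o => [i|] /=; last by rewrite mulr0 addr0.
rewrite /dropped /=; case: ifP => xi /=; last by rewrite subrr mul0r addr0.
rewrite subr0 mul1r /move_unit natrD natrB; last by case: eqP => // ->.
by rewrite (eq_sym l i) (eq_sym l k); ring.
Qed.

Lemma normr_displacement_le1 l k o : `|displacement l k o| <= 1.
Proof.
case: o => [i|] /=; last by rewrite normr0 ler01.
by case: (k == l); case: (i == l); rewrite /= ?subrr ?normr0 ?subr0 ?sub0r ?normrN ?normr1.
Qed.

Lemma normr_mean_displacement_le1 t l : `|mean_displacement t l| <= 1.
Proof.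
have hd k o : -1 <= displacement l k o <= 1.
  by rewrite -ler_norml normr_displacement_le1.
rewrite ler_norml; apply/andP; split.
  by rewrite -(slot_mean_cst t (-1)); apply: slot_mean_le => j k o; case/andP: (hd k o).
by rewrite -(slot_mean_cst t 1); apply: slot_mean_le => j k o; case/andP: (hd k o).
Qed.

Lemma linear_potential_drift (sg : R) l s t x : (s <= t)%N -> `|sg| <= 1 ->
  sg * ((x l)%:R - cumulative_displacement l s t) <=
  slot_mean t (fun j k o =>
    sg * ((next_state x k o l)%:R - cumulative_displacement l s t.+1) + dropped x o).
Proof.
move=> st sg_le1; rewrite cumulative_displacementS //.
set X := (x l)%:R; set D := cumulative_displacement l s t; set m := mean_displacement t l.
have pointwise (j : VD) k o : sg * (X - D - m) + sg * displacement l k o <=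
    sg * ((next_state x k o l)%:R - (D + m)) + dropped x o.
  have sgd : sg * displacement l k o <= 1.
    apply: le_trans (ler_norm _) _; rewrite normrM -[1]mulr1.
    by rewrite ler_pM ?normr_displacement_le1.
  have dr_ge0 : 0 <= dropped x o by rewrite ler0n.
  rewrite next_state_at; nra.
apply: le_trans (slot_mean_le t pointwise).
by rewrite slot_meanD slot_mean_cst slot_meanZ -/(mean_displacement t l) -/m; lra.
Qed.

Section UnservableDestination.
Variables (j0 : VD) (l : 'I_n).
Hypothesis j0_l : ~~ E j0 l.
Local Notation p := (phi j0 l).
Local Notation D := (cumulative_displacement l).

(* A lower bound for [d ^+ 2 - m * d], [d] the displacement of a successful
   dispatch: a (j0, l) customer is never served from l, so it moves a unit into l
   from elsewhere. *)
Definition forced_gain (m : R) (j : VD) (k : 'I_n) (o : option 'I_n) : R :=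
  if [&& j == j0, k == l & o != Some l] then 1 - m else 0.

Lemma slot_mean_forced_gain t m : slot_mean t (forced_gain m) = p * (1 - m).
Proof.
rewrite /slot_mean (bigD1 j0) //= [X in _ + X]big1 ?addr0 => [|j /negbTE j_j0]; last first.
  apply: big1 => k _; rewrite /forced_gain j_j0 /= mulr0 add0r big1 ?mulr0 // => i _.
  by rewrite mulr0.
rewrite (bigD1 l) //= [X in _ + X]big1 ?addr0 => [|k /negbTE k_l]; last first.
  rewrite /forced_gain eqxx k_l /= mulr0 add0r big1 ?mulr0 // => i _.
  by rewrite mulr0.
rewrite /forced_gain !eqxx /=; congr (_ * _).
rewrite (eq_bigr (fun i => u j0 l t (Some i) * (1 - m))) => [|i _]; last first.
  case: (eqVneq i l) => [->|i_l]; first by rewrite u_supp // !mul0r.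
  by rewrite (inj_eq Some_inj) i_l.
by rewrite -mulr_suml -mulrDl -big_option u_sum1 mul1r.
Qed.

Lemma quadratic_potential_drift (b : R) s t x : (s <= t)%N ->
  `|2 * ((x l)%:R - D s t) - mean_displacement t l| <= b ->
  ((x l)%:R - D s t) ^+ 2 + p * D s t + p <=
  slot_mean t (fun j k o =>
    ((next_state x k o l)%:R - D s t.+1) ^+ 2 + p * D s t.+1 + (b + 2) * dropped x o).
Proof.
move=> st; rewrite cumulative_displacementS //.
set c := (x l)%:R - D s t; set m := mean_displacement t l => hb.
have /andP[m_ge m_le] : -1 <= m <= 1 by rewrite -ler_norml normr_mean_displacement_le1.
move: hb; rewrite ler_norml => /andP[hb1 hb2].
have p_ge0 := phi_ge0 j0 l.
have pointwise (j : VD) k o :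
    c ^+ 2 + p * D s t + p * m - (2 * c - m) * m
      + (2 * c - m) * displacement l k o + forced_gain m j k o <=
    ((next_state x k o l)%:R - (D s t + m)) ^+ 2 + p * (D s t + m) + (b + 2) * dropped x o.
  rewrite next_state_at (_ : (x l)%:R = c + D s t); last by rewrite subrK.
  rewrite /forced_gain /dropped; case: o => [i|] /=.
    rewrite (inj_eq Some_inj).
    by case: (0 < x i)%N; case: (j == j0); case: (k == l); case: (i == l); rewrite /=; nra.
  by case: (j == j0); case: (k == l); rewrite /=; nra.
apply: le_trans (slot_mean_le t pointwise).
rewrite !slot_meanD !slot_mean_cst slot_meanZ slot_mean_forced_gain.
by rewrite -/(mean_displacement t l) -/m; lra.
Qed.

Lemma excursion_drops K r L s x : (r <= L)%N ->
  3 * K%:R < `|D s (s + r)| -> units x = K -> K%:R <= ED s L x.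
Proof.
move=> rL hr hx; set N := D s (s + r) in hr.
pose sg : R := if 0 <= N then 1 else -1.
have sg_le1 : `|sg| <= 1 by rewrite /sg; case: ifP; rewrite ?normrN normr1.
have drift t y : (s <= t < s + r)%N -> units y = K ->
    sg * ((y l)%:R - D s t) + 0 <=
    slot_mean t (fun j k o => sg * ((next_state y k o l)%:R - D s t.+1) + 1 * dropped y o).
  move=> /andP[st _] _; rewrite addr0; apply: le_trans (linear_potential_drift l y st sg_le1) _.
  by apply: slot_mean_le => j k o; rewrite mul1r.
have final y : units y = K -> sg * ((y l)%:R - N) <= K%:R - `|N|.
  move=> /(units_at_bounds l) /andP[y_ge0 y_le]; rewrite /sg; case: ifP => N_ge0.
    by rewrite ger0_norm //; lra.
  by rewrite ltr0_norm ?ltNge ?N_ge0 //; lra.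
have := expected_drops_drift ler01 drift final hx.
rewrite mul0r add0r mul1r cumulative_displacement0 subr0 => drops.
have := expected_drops_mono r (L - r) s x; rewrite subnKC // => mono.
have : - K%:R <= sg * (x l)%:R.
  by case/andP: (units_at_bounds l hx) => *; rewrite /sg; case: ifP => _; lra.
lra.
Qed.

Lemma confined_drops K L s x : (1 <= K)%N ->
  16 * K%:R ^+ 2 + 11 * K%:R + 3 <= p * L%:R ->
  (forall r, (r <= L)%N -> `|D s (s + r)| <= 3 * K%:R) ->
  units x = K -> 1 <= ED s L x.
Proof.
move=> K_ge1 hL confined hx.
(* The potential starts at x_l^2 >= 0, gains at least p per slot and ends below
   16 K^2 + 3 K, while a drop is worth at most 8 K + 3. *)
have K_ge1' : 1 <= K%:R :> R by rewrite ler1n.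
have p_ge0 := phi_ge0 j0 l; have p_le1 := phi_le1 j0 l.
pose b : R := 8 * K%:R + 1.
have drift t y : (s <= t < s + L)%N -> units y = K ->
    ((y l)%:R - D s t) ^+ 2 + p * D s t + p <=
    slot_mean t (fun j k o =>
      ((next_state y k o l)%:R - D s t.+1) ^+ 2 + p * D s t.+1 + (b + 2) * dropped y o).
  move=> /andP[st tL] hy.
  have Dt : `|D s t| <= 3 * K%:R.
    by have := confined (t - s)%N; rewrite subnKC //; apply; rewrite leq_subLR ltnW.
  apply: quadratic_potential_drift st _.
  move: Dt (normr_mean_displacement_le1 t l) (units_at_bounds l hy).
  by rewrite /b !ler_norml => /andP[? ?] /andP[? ?] /andP[? ?]; apply/andP; split; lra.
have final y : units y = K ->
    ((y l)%:R - D s (s + L)) ^+ 2 + p * D s (s + L) <= 16 * K%:R ^+ 2 + 3 * K%:R.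
  have := confined L (leqnn L); rewrite ler_norml => /andP[D_ge D_le].
  by move=> /(units_at_bounds l) /andP[y_ge0 y_le]; nra.
have b2_gt0 : 0 < b + 2 by rewrite /b; lra.
have := expected_drops_drift (ltW b2_gt0) drift final hx.
rewrite cumulative_displacement0 mulr0 addr0 subr0 -(ler_pM2l b2_gt0) mulr1.
have : 0 <= (x l)%:R ^+ 2 :> R by rewrite sqr_ge0.
rewrite /b; lra.
Qed.

Lemma window_drops K L : (1 <= K)%N ->
  16 * K%:R ^+ 2 + 11 * K%:R + 3 <= p * L%:R -> drops_every_window K L.
Proof.
move=> K_ge1 hL s x hx.
have [[r [rL hr]]|no_excursion] :=
  pselect (exists r, (r <= L)%N /\ 3 * K%:R < `|D s (s + r)|).
  by apply: le_trans (excursion_drops rL hr hx); rewrite ler1n.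
apply: (confined_drops K_ge1 hL _ hx) => r rL; rewrite leNgt; apply/negP => hr.
by apply: no_excursion; exists r.
Qed.

Lemma PK_ge_inv_sq : 0 < p ->
  exists2 c : R, 0 < c & forall K, (1 <= K)%N -> c / K%:R ^+ 2 <= PK phi u K.
Proof.
move=> p_gt0; pose N0 := (Num.truncn p^-1).+1.
have pN0 : 1 <= p * N0%:R by rewrite -ler_pdivrMl // mulr1 ltW // truncnS_gt.
exists (60 * N0%:R)^-1 => [|K K_ge1]; first by rewrite invr_gt0 mulr_gt0 ?ltr0n.
pose L := (30 * K ^ 2 * N0)%N.
have K_gt0 : 0 < K%:R :> R by rewrite ltr0n.
have -> : (60 * N0%:R)^-1 / K%:R ^+ 2 = (2 * L%:R)^-1 :> R.
  by rewrite /L !natrM; field; rewrite !gt_eqF ?ltr0n.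
apply: (PK_ge_window l); first by rewrite /L !muln_gt0 K_ge1.
apply: window_drops => //; rewrite /L !natrM.
have K_ge1' : 1 <= K%:R :> R by rewrite ler1n.
have : 0 <= K%:R ^+ 2 :> R by rewrite sqr_ge0.
nra.
Qed.

End UnservableDestination.

End Policy.

Theorem proposition2 (R : realType) (VD : finType) (n : nat)
    (E : VD -> 'I_n -> bool) (phi : VD -> 'I_n -> R)
    (u : VD -> 'I_n -> nat -> option 'I_n -> R) :
  arrival_matrix phi ->
  assumptionA E phi ->
  state_indep_policy E u ->
  (exists2 c : R, 0 < c &
     exists K0 : nat, forall K : nat, (K0 <= K)%N ->
       c / (K%:R ^+ 2) <= PK phi u K) /\
  gamma_o phi u = 0.
Proof.
move=> [phi_ge0 phi_sum1] [j0 [l [j0_l p_gt0]]] [u_ge0 [u_sum1 u_supp]].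
have [c c_gt0 PK_ge] := PK_ge_inv_sq phi_ge0 phi_sum1 u_ge0 u_sum1 u_supp j0_l p_gt0.
split; first by exists c => //; exists 1%N.
rewrite /gamma_o (limn_inf_ln_div c_gt0) ?oppr0 // => K K_ge1.
by rewrite PK_ge //= (PK_le1 phi_ge0 phi_sum1 u_ge0 u_sum1).
Qed.
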